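(* For every positive integer $s$ and every positive integer $l$, the vector of polynomials $I^{[lp^s-1]}_{p^s}(z)\in\mathbb Z[z]^n$ is a solution of the KZ system modulo $p^s$.
   Context: Let $p$ be an odd prime, $g\ge1$, $n=2g+1$, with $p>n$. Write $z=(z_1,\dots,z_n)$. For $1\le i\ne j\le n$ let $\Omega_{ij}$ be the $n\times n$ matrix whose $(i,i)$ and $(j,j)$ entries are $-1$, whose $(i,j)$ and $(j,i)$ entries are $1$, and all of whose other entries are $0$. The KZ system is the system for a column vector $I=(I_1,\dots,I_n)$ of functions of $z$: $\frac{\partial I}{\partial z_i}=\frac12\sum_{j\ne i}\frac{\Omega_{ij}}{z_i-z_j}\,I$ for $i=1,\dots,n$, together with $I_1+\dots+I_n=0$. For a positive integer $s$ let $\pi_s$ denote reduction modulo $p^s$ (on $\mathbb Z$, $\mathbb Z[z]$, $\mathbb Z[z]^n$). A vector $I(z)\in\mathbb Z[z]^n$ is a solution of the KZ system modulo $p^s$ if $\pi_s I\in(\mathbb Z/p^s\mathbb Z)[z]^n$ satisfies the KZ system (the differential equations being understood in $(\mathbb Z/p^s\mathbb Z)[z]$ after multiplying the $i$-th equation by $\prod_{j\ne i}(z_i-z_j)$). For a positive integer $r$ put $M_r=(p^r-1)/2$, $\Phi_{p^r}(x,z)=\prod_{i=1}^n(x-z_i)^{M_r}\in\mathbb Z[x,z]$, and expand $\Big(\frac{\Phi_{p^r}(x,z)}{x-z_1},\dots,\frac{\Phi_{p^r}(x,z)}{x-z_n}\Big)=\sum_i P^i_{p^r}(z)\,x^i$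 with $P^i_{p^r}(z)\in\mathbb Z[z]^n$. For a positive integer $l$ set $I^{[lp^r-1]}_{p^r}(z)=P^{lp^r-1}_{p^r}(z)$. *)

From HB Require Import structures.
From mathcomp Require Import all_boot all_order all_algebra.
From mathcomp Require Import mpoly.
Set Implicit Arguments.
Unset Strict Implicit.
Unset Printing Implicit Defensive.
Import GRing.Theory.
Local Open Scope ring_scope.

Definition Mr (p r : nat) : nat := ((p ^ r).-1)./2.

Definition Phi (n p r : nat) : {poly {mpoly int[n]}} :=
  \prod_(i < n) ('X - ('X_i)%:P) ^+ Mr p r.

(* Phi_{p^r}(x,z) / (x - z_j), written out as the exact quotient
   (M_r >= 1 since p^r >= 3). *)
Definition Phi_div (n p r : nat) (j : 'I_n) : {poly {mpoly int[n]}} :=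
  ('X - ('X_j)%:P) ^+ (Mr p r).-1 *
  \prod_(i < n | i != j) ('X - ('X_i)%:P) ^+ Mr p r.

Definition Pcoef (n p r i : nat) (j : 'I_n) : {mpoly int[n]} :=
  (Phi_div p r j)`_i.

Definition Ivec (n p r l : nat) : 'I_n -> {mpoly int[n]} :=
  fun j => Pcoef p r (l * p ^ r).-1 j.
Arguments Ivec : clear implicits.

Definition Omega (n : nat) (i j : 'I_n) : 'M[int]_n :=
  \matrix_(a < n, b < n)
    (if (a == b) then (if (a == i) || (a == j) then -1 else 0)
     else if ((a == i) && (b == j)) || ((a == j) && (b == i)) then 1 else 0).

Definition redmod (m : nat) (n : nat) (q : {mpoly int[n]}) : {mpoly 'Z_m[n]} :=
  map_mpoly (fun c : int => (c%:~R : 'Z_m)) q.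

(* I is a solution of the KZ system modulo m: the reduction pi I satisfies
   sum_k I_k = 0 and, for each i, the i-th equation multiplied by
   prod_{j<>i} (z_i - z_j):
   prod_{j<>i}(z_i-z_j) dI/dz_i
     = 1/2 sum_{j<>i} prod_{q<>i,j}(z_i - z_q) Omega_{ij} I. *)
Definition KZ_sol_mod (m n : nat) (I : 'I_n -> {mpoly int[n]}) : Prop :=
  let J := fun k => redmod m (I k) in
  (\sum_(k < n) J k = 0) /\
  forall i k : 'I_n,
    (\prod_(j < n | j != i) ('X_i - 'X_j)) * (J k)^`M(i) =
    (2%:R : 'Z_m)^-1 *:
      \sum_(j < n | j != i)
        (\prod_(q < n | (q != i) && (q != j)) ('X_i - 'X_q)) *
        \sum_(c < n) (((Omega i j) k c)%:~R : 'Z_m) *: J c.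

From HB Require Import structures.
From mathcomp Require Import all_boot all_order all_algebra.
From mathcomp Require Import mpoly ring.
Set Implicit Arguments.
Unset Strict Implicit.
Unset Printing Implicit Defensive.
Import GRing.Theory.
Local Open Scope ring_scope.

(* Work over A = (Z/m)[z] with m = p^s = 2M + 1, in the polynomial ring A[x],
   and put L_a = x - z_a, psi_k = Phi / L_k, psi2_{ik} = Phi / (L_i L_k).
   The reduction of I_k is the coefficient of x^N in psi_k, with N = l m - 1.
   Two observations drive everything:
   - since m divides N + 1, the x^N coefficient of any x-derivative vanishes
     modulo m; hence d/dz_i and the "shifted" derivation d/dz_i + d/dx have
     the same effect on x^N coefficients;
   - d/dx kills L_a, while d/dz_i + d/dx kills L_i and sends L_a to 1 for a <> i.
   A general Leibniz-rule computation of the derivatives of psi_k in terms of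
   psi2 (for an arbitrary derivation-like map on a commutative ring) then gives
   sum_k I_k = 0 (from d/dx Phi) and the KZ equations, using the identity
   I_j - I_i = (z_j - z_i) psi2_{ij}[x^N] and 1/2 = -M modulo m. *)

Section Leibniz.
Variables (R : comPzRingType) (d : R -> R).
Hypothesis dM : forall x y, d (x * y) = d x * y + x * d y.

(* From d 1 = d 1 + d 1. *)
Lemma leibniz1 : d 1 = 0.
Proof.
have := dM 1 1; rewrite !mul1r mulr1 => d1.
by apply: (@addrI _ (d 1)); rewrite addr0 -d1.
Qed.

Lemma leibniz_prod_seq (I : eqType) (s : seq I) (F : I -> R) :
  d (\prod_(x <- s) F x) = \sum_(j <- s) d (F j) * \prod_(x <- rem j s) F x.
Proof.
elim: s => [|x s IH]; first by rewrite !big_nil leibniz1.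
rewrite !big_cons dM IH /= eqxx; congr (_ + _).
rewrite mulr_sumr [LHS]big_seq [RHS]big_seq; apply: eq_bigr => j js.
case: eqP => [->|_]; last by rewrite big_cons; ring.
by rewrite (perm_big _ (perm_to_rem js)) big_cons /=; ring.
Qed.

Lemma leibniz_prod n (P : pred 'I_n) (F : 'I_n -> R) :
  d (\prod_(a < n | P a) F a) =
  \sum_(j < n | P j) d (F j) * \prod_(a < n | P a && (a != j)) F a.
Proof.
rewrite -big_filter leibniz_prod_seq big_filter; apply: eq_bigr => j _.
rewrite rem_filter ?filter_uniq ?index_enum_uniq // -filter_predI big_filter.
by congr (_ * _); apply: eq_bigl => a /=; rewrite andbC.
Qed.

Lemma leibniz_prod_const n (P : pred 'I_n) (F : 'I_n -> R) :
  (forall a, P a -> d (F a) = 0) -> d (\prod_(a < n | P a) F a) = 0.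
Proof. by move=> F0; rewrite leibniz_prod big1 // => j /F0 ->; rewrite mul0r. Qed.

Lemma leibniz_exp x e : d (x ^+ e) = x ^+ e.-1 * d x *+ e.
Proof.
elim: e => [|[|e] IH]; first by rewrite expr0 leibniz1 mulr0n.
  by rewrite expr1 expr0 mul1r.
by rewrite exprS dM IH /= !exprS; ring.
Qed.

End Leibniz.

Section Quotients.
Variables (R : comPzRingType) (n : nat) (L : 'I_n -> R) (M : nat).
Hypothesis M_gt0 : (0 < M)%N.

(* psi k = Phi / L_k. *)
Definition psi (k : 'I_n) : R :=
  L k ^+ M.-1 * \prod_(a < n | a != k) L a ^+ M.

(* psi2 i k = Phi / (L_i L_k), for i <> k. *)
Definition psi2 (i k : 'I_n) : R :=
  L i ^+ M.-1 * L k ^+ M.-1 * \prod_(a < n | (a != i) && (a != k)) L a ^+ M.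

(* Uses M > 0: x^M = x * x^(M-1). *)
Lemma exprM_pred (x : R) : x ^+ M = x * x ^+ M.-1.
Proof. by rewrite -exprS prednK. Qed.

Lemma psi_split i k : k != i ->
  psi k = L k ^+ M.-1 * (L i ^+ M * \prod_(a < n | (a != i) && (a != k)) L a ^+ M).
Proof.
move=> ki; rewrite /psi (bigD1 i) 1?eq_sym //.
by rewrite (eq_bigl (fun a => (a != i) && (a != k))) // => a; rewrite andbC.
Qed.

Lemma psi_psi2 i k : k != i -> psi k = L i * psi2 i k.
Proof. by move=> ki; rewrite (psi_split ki) /psi2 (exprM_pred (L i)); ring. Qed.

Lemma psi2C i k : psi2 i k = psi2 k i.
Proof.
rewrite /psi2 (eq_bigl (fun a => (a != k) && (a != i))); first by ring.
by move=> a; rewrite andbC.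
Qed.

Variable d : R -> R.
Hypothesis dM : forall x y, d (x * y) = d x * y + x * d y.

Lemma leibniz_Phi : (forall a, d (L a) = 1) ->
  d (\prod_(a < n) L a ^+ M) = (\sum_k psi k) *+ M.
Proof.
move=> dL; rewrite (leibniz_prod dM) -sumrMnl; apply: eq_bigr => j _.
by rewrite (leibniz_exp dM) dL mulr1 /psi; ring.
Qed.

Lemma leibniz_psi_diag i : d (L i) = 0 -> (forall a, a != i -> d (L a) = 1) ->
  d (psi i) = (\sum_(j < n | j != i) psi2 i j) *+ M.
Proof.
move=> dLi dL; rewrite /psi dM (leibniz_exp dM) dLi mulr0 mul0rn mul0r add0r.
rewrite (leibniz_prod dM) mulr_sumr -sumrMnl; apply: eq_bigr => j ji.
by rewrite (leibniz_exp dM) dL // mulr1 /psi2; ring.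
Qed.

Lemma leibniz_psi_offdiag i k : k != i ->
  d (L i) = -1 -> (forall a, a != i -> d (L a) = 0) ->
  d (psi k) = - (psi2 i k *+ M).
Proof.
move=> ki dLi dL; rewrite (psi_split ki) !dM (leibniz_prod_const dM); last first.
  by move=> a /andP [ai _]; rewrite (leibniz_exp dM) dL // mulr0 mul0rn.
rewrite !(leibniz_exp dM) dLi dL // /psi2 mulr0 mul0rn !mul0r !add0r mulr0 addr0.
by rewrite -mulNrn; ring.
Qed.

End Quotients.

Section LinearFactors.
Variables (K : comNzRingType) (n : nat).
Local Notation A := {mpoly K[n]}.

Lemma mderivXi (i j : 'I_n) : ('X_j : A)^`M(i) = (i == j)%:R.
Proof.
rewrite mderivX mnm1E eq_sym; case: eqP => [->|_] /=; last by rewrite scale0r.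
have -> : (U_(j) - U_(j) = 0)%MM by apply/mnmP=> k; rewrite mnmBE subnn mnm0E.
by rewrite mpolyX0 scale1r.
Qed.

Definition lin (a : 'I_n) : {poly A} := 'X - ('X_a)%:P.

Definition pderiv (i : 'I_n) (q : {poly A}) : {poly A} := map_poly (mderiv i) q.

Lemma pderivM i q r : pderiv i (q * r) = pderiv i q * r + q * pderiv i r.
Proof.
apply/polyP=> k; rewrite coefD coef_map (coefM q r) (coefM (pderiv i q) r).
rewrite (coefM q (pderiv i r)) raddf_sum -big_split; apply: eq_bigr => j _.
by rewrite /pderiv !coef_map; apply: mderivM.
Qed.

Lemma pderiv_lin i a : pderiv i (lin a) = - ((i == a)%:R)%:P.
Proof.
apply/polyP=> k; rewrite coef_map /lin coefB coefX coefC coefN coefC.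
case: k => [|[|k]] /=.
- by rewrite sub0r mderivN mderivXi.
- by rewrite subr0 oppr0 (leibniz1 (mderivM i)).
- by rewrite subr0 oppr0 mderiv0.
Qed.

Lemma pderiv_lin_same i : pderiv i (lin i) = -1.
Proof. by rewrite pderiv_lin eqxx polyC1. Qed.

Lemma pderiv_lin_other i a : a != i -> pderiv i (lin a) = 0.
Proof. by move=> ai; rewrite pderiv_lin eq_sym (negbTE ai) polyC0 oppr0. Qed.

Lemma deriv_lin a : deriv (lin a) = 1.
Proof. by rewrite /lin derivB derivX derivC subr0. Qed.

Definition shift_deriv (i : 'I_n) (q : {poly A}) : {poly A} :=
  pderiv i q + deriv q.

Lemma shift_derivM i q r :
  shift_deriv i (q * r) = shift_deriv i q * r + q * shift_deriv i r.
Proof. by rewrite /shift_deriv pderivM derivM; ring. Qed.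

Lemma shift_deriv_lin_same i : shift_deriv i (lin i) = 0.
Proof. by rewrite /shift_deriv pderiv_lin_same deriv_lin addNr. Qed.

Lemma shift_deriv_lin_other i a : a != i -> shift_deriv i (lin a) = 1.
Proof. by move=> ai; rewrite /shift_deriv pderiv_lin_other // deriv_lin add0r. Qed.

End LinearFactors.

Section KZModulo.
Variables (m n : nat).
Hypothesis m_gt1 : (1 < m)%N.
Local Notation K := 'Z_m.
Local Notation A := {mpoly K[n]}.

Lemma mulrn_char (x : A) k : (m %| k)%N -> x *+ k = 0.
Proof.
move=> /dvdnP [q ->]; rewrite mulrnA -mulr_natr -mpolyC_nat.
by rewrite (pchar_Zp m_gt1) mpolyC0 mulr0.
Qed.

(* The x^N coefficient of an x-derivative is (N + 1) times a coefficient. *)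
Lemma coef_deriv_char (q : {poly A}) N : (m %| N.+1)%N -> (deriv q)`_N = 0.
Proof. by move=> mN; rewrite coef_deriv mulrn_char. Qed.

Variables (M N : nat).
Hypothesis M_gt0 : (0 < M)%N.
Hypothesis m_def : M.*2.+1 = m.
Hypothesis m_dvd : (m %| N.+1)%N.

Lemma mulrn_M_eq0 (x : A) : x *+ M = 0 -> x = 0.
Proof.
move=> xM0; have m_dvd_m : (m %| M.*2.+1)%N by rewrite m_def.
by have := mulrn_char x m_dvd_m; rewrite mulrS -muln2 mulrnA xM0 mul0rn addr0.
Qed.

(* 1/2 = -M in Z/(2M+1), since 2 (-M) = 1 - (2M + 1). *)
Lemma inv2E : (2%:R : K)^-1 = - M%:R.
Proof.
apply: mulr1_eq; rewrite mulrN -natrM mul2n.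
have := f_equal (fun t => (t%:R : K)) m_def.
rewrite /= (pchar_Zp m_gt1) mulrS => /eqP; rewrite addr_eq0 => /eqP.
by move=> <-.
Qed.

Lemma omega_sum (V : 'I_n -> A) (i j k : 'I_n) : j != i ->
  \sum_(c < n) (((Omega i j) k c)%:~R : K) *: V c =
  if k == i then V j - V i else if k == j then V i - V j else 0.
Proof.
move=> ji; rewrite (bigD1 i) // (bigD1 j) //= big1; last first.
  move=> c /andP [ci cj]; rewrite mxE.
  case: eqP => [->|_]; first by rewrite (negbTE ci) (negbTE cj) scale0r.
  by rewrite (negbTE ci) (negbTE cj) !andbF scale0r.
rewrite !mxE eqxx (negbTE ji) [i == j]eq_sym (negbTE ji) eqxx addr0.
have [->|ki] := eqVneq k i; rewrite ?eqxx /=.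
  by rewrite eq_sym (negbTE ji) /= scaleN1r scale1r addrC.
case: (k == j) => /=; first by rewrite scaleN1r scale1r.
by rewrite !scale0r addr0.
Qed.

Lemma lin_sub (a b : 'I_n) : lin K a - lin K b = ('X_b - 'X_a)%:P.
Proof. by rewrite /lin polyCB; ring. Qed.

Variable J : 'I_n -> A.
Hypothesis J_def : forall k, J k = (psi (lin K (n:=n)) M k)`_N.

(* The linear constraint: x^N coefficient of d/dx Phi = M sum_k psi_k. *)
Lemma KZ_sum : \sum_(k < n) J k = 0.
Proof.
have := f_equal (fun q : {poly A} => q`_N) (leibniz_Phi M (@derivM _) (@deriv_lin K n)).
rewrite /= coef_deriv_char // coefMn coef_sum.
by rewrite -(eq_bigr _ (fun k _ => esym (J_def k))) => /esym/mulrn_M_eq0.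
Qed.

Lemma J_sub (i j : 'I_n) : j != i ->
  J j - J i = ('X_j - 'X_i) * (psi2 (lin K (n:=n)) M i j)`_N.
Proof.
move=> ji; rewrite !J_def -coefB (psi_psi2 _ M_gt0 ji).
have ij : i != j by rewrite eq_sym.
rewrite (psi_psi2 _ M_gt0 ij) [X in _ - _ * X]psi2C -mulrBl lin_sub.
by rewrite coefCM.
Qed.

Lemma coef_pderiv_J (i k : 'I_n) : (J k)^`M(i) = (pderiv i (psi (lin K (n:=n)) M k))`_N.
Proof. by rewrite J_def /pderiv coef_map. Qed.

(* The i-th equation for the i-th component: here d/dz_i may be replaced by
   the shifted derivation, which kills L_i and sends the other L_a to 1. *)
Lemma KZ_diag (i : 'I_n) :
  (\prod_(j < n | j != i) ('X_i - 'X_j)) * (J i)^`M(i) =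
  - M%:R *: \sum_(j < n | j != i)
     (\prod_(q < n | (q != i) && (q != j)) ('X_i - 'X_q)) * (J j - J i).
Proof.
have := f_equal (fun q : {poly A} => q`_N)
  (leibniz_psi_diag M (shift_derivM i) (shift_deriv_lin_same K i) (@shift_deriv_lin_other K n i)).
rewrite /= /shift_deriv coefD coef_deriv_char // addr0 coefMn coef_sum.
rewrite coef_pderiv_J => ->; rewrite scaleNr scaler_nat mulrnAr mulr_sumr.
rewrite -sumrMnl -mulNrn -sumrN -sumrMnl; apply: eq_bigr => j ji.
by rewrite J_sub // (bigD1 j) //=; ring.
Qed.

(* The i-th equation for the k-th component, k <> i: d/dz_i sends L_i to -1
   and kills the other L_a. *)
Lemma KZ_offdiag (i k : 'I_n) : k != i ->
  (\prod_(j < n | j != i) ('X_i - 'X_j)) * (J k)^`M(i) =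
  - M%:R *: ((\prod_(q < n | (q != i) && (q != k)) ('X_i - 'X_q)) * (J i - J k)).
Proof.
move=> ki; rewrite coef_pderiv_J.
rewrite (leibniz_psi_offdiag M (@pderivM _ _ i) ki (pderiv_lin_same K i) (@pderiv_lin_other K n i)).
rewrite coefN coefMn J_sub 1?eq_sym // psi2C (bigD1 k) //= scaleNr scaler_nat.
ring.
Qed.

Lemma KZ_eq (i k : 'I_n) :
  (\prod_(j < n | j != i) ('X_i - 'X_j)) * (J k)^`M(i) =
  (2%:R : K)^-1 *: \sum_(j < n | j != i)
     (\prod_(q < n | (q != i) && (q != j)) ('X_i - 'X_q)) *
     \sum_(c < n) (((Omega i j) k c)%:~R : K) *: J c.
Proof.
rewrite inv2E (eq_bigr _ (fun j ji => congr1 (fun v => _ * v) (omega_sum J k ji))).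
have [->|ki] := eqVneq k i; first by rewrite KZ_diag.
rewrite KZ_offdiag // [in RHS](bigD1 k) //= eqxx [X in _ *: (_ + X)]big1 ?addr0 //.
by move=> j /andP [_ jk]; rewrite eq_sym (negbTE jk) mulr0.
Qed.

End KZModulo.

Lemma redmod_lin (m n : nat) (a : 'I_n) :
  map_poly (@redmod m n) ('X - ('X_a)%:P) = lin 'Z_m a.
Proof. by rewrite rmorphB /= map_polyX map_polyC /= /redmod map_mpolyX. Qed.

Lemma redmod_Phi_div (m n p r : nat) (k : 'I_n) :
  map_poly (@redmod m n) (Phi_div p r k) = psi (lin 'Z_m (n:=n)) (Mr p r) k.
Proof.
rewrite /Phi_div /psi rmorphM rmorphXn rmorph_prod; congr (_ ^+ _ * _).
  exact: redmod_lin.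
by apply: eq_bigr => a _; rewrite rmorphXn; congr (_ ^+ _); exact: redmod_lin.
Qed.

Lemma Mr_double (p s : nat) : odd p -> (Mr p s).*2.+1 = (p ^ s)%N.
Proof.
move=> p_odd; have ps_odd : odd (p ^ s) by rewrite ssrnat.oddX p_odd orbT.
have ps_gt0 : (0 < p ^ s)%N by rewrite expn_gt0; case: p p_odd {ps_odd}.
rewrite /Mr -[in RHS](prednK ps_gt0); congr _.+1.
have pred_even : odd (p ^ s).-1 = false.
  by move: ps_odd; rewrite -{1}(prednK ps_gt0) /= => /negbTE.
by rewrite -[in RHS](odd_double_half (p ^ s).-1) pred_even add0n.
Qed.

Theorem theorem4p4 (p g : nat) :
  prime p -> odd p -> (1 <= g)%N -> (g.*2.+1 < p)%N ->
  forall s l : nat, (0 < s)%N -> (0 < l)%N ->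
    KZ_sol_mod (p ^ s) (Ivec g.*2.+1 p s l).
Proof.
move=> p_prime p_odd _ _ s l s_gt0 l_gt0.
have m_gt1 : (1 < p ^ s)%N by rewrite -(exp1n s) ltn_exp2r // prime_gt1.
have m_def := Mr_double s p_odd.
have M_gt0 : (0 < Mr p s)%N by rewrite -double_gt0 -ltnS m_def.
have m_dvd : (p ^ s %| (l * p ^ s).-1.+1)%N.
  by rewrite prednK ?dvdn_mull // muln_gt0 l_gt0 ltnW.
pose J k := redmod (p ^ s) (Ivec g.*2.+1 p s l k).
have J_def k : J k = (psi (lin 'Z_(p ^ s) (n:=g.*2.+1)) (Mr p s) k)`_((l * p ^ s).-1).
  by rewrite /J /Ivec /Pcoef -redmod_Phi_div coef_map.
split; first exact: (KZ_sum m_gt1 m_def m_dvd J_def).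
by move=> i k; exact: (KZ_eq m_gt1 M_gt0 m_def m_dvd J_def i k).
Qed.
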